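(* Let $R$ be a commutative ring and $B,B'$ two quadratically presented $R$-modules fitting into exact sequences of $R$-modules $0\to A\to B\to C\to0$ and $0\to A'\to B'\to C\to0$. Then $\mathrm{Fitt}_R(A)\mathrm{Fitt}_R(B')=\mathrm{Fitt}_R(A')\mathrm{Fitt}_R(B)$.
   Context: An $R$-module $N$ is quadratically presented if there exist $m\ge1$ and an exact sequence $R^m\to R^m\to N\to0$. $\mathrm{Fitt}_R$ denotes the $0$th Fitting ideal. *)

From HB Require Import structures.
From mathcomp Require Import all_boot all_order all_algebra.
Set Implicit Arguments. Unset Strict Implicit. Unset Printing Implicit Defensive.
Import Order.TTheory GRing.Theory Num.Theory.
Local Open Scope ring_scope.

Definition ideal_mul (R : comPzRingType) (I J : R -> Prop) (r : R) : Prop :=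
  exists (k : nat) (a b : 'I_k -> R),
    (forall i, I (a i) /\ J (b i)) /\ r = \sum_(i < k) a i * b i.

Definition fitt_gen (R : comPzRingType) (M : lmodType R) (r : R) : Prop :=
  exists (n : nat) (x : 'I_n -> M) (X : 'M[R]_n),
    (forall m : M, exists c : 'I_n -> R, m = \sum_(j < n) c j *: x j) /\
    (forall i : 'I_n, \sum_(j < n) X i j *: x j = 0) /\
    r = \det X.

(* 0-th Fitting ideal: the ideal generated by all such determinants.
   (For a finitely generated module this is the usual Fitt_0, independent of
   the generating family; for a non-finitely generated module it is the zero
   ideal.) *)
Definition Fitt (R : comPzRingType) (M : lmodType R) (r : R) : Prop :=
  exists (k : nat) (c g : 'I_k -> R),
    (forall i, fitt_gen M (g i)) /\ r = \sum_(i < k) c i * g i.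

Definition quad_presented (R : comPzRingType) (N : lmodType R) : Prop :=
  exists (m : nat) (P : 'M[R]_m) (psi : {linear 'rV[R]_m -> N}),
    (0 < m)%N /\
    (forall y : N, exists v : 'rV[R]_m, psi v = y) /\
    (forall v : 'rV[R]_m, psi v = 0 <-> exists w : 'rV[R]_m, v = w *m P).

Definition short_exact (R : comPzRingType) (A B C : lmodType R)
  (f : {linear A -> B}) (g : {linear B -> C}) : Prop :=
  injective f /\
  (forall c : C, exists b : B, g b = c) /\
  (forall b : B, g b = 0 <-> exists a : A, f a = b).

(* For 0 -> A -> M -> N -> 0 exact with N quadratically presented,
   Fitt(M) = Fitt(A) Fitt(N); both sides of the theorem are therefore the
   Fitting ideal of the pullback B x_C B', an extension of B' by A and of B
   by A'.  In fact the relation determinants of M are exactly the products of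
   those of A and N.  Square presentations X of A and Y of N glue into the
   block lower triangular presentation [X 0; Z Y] of M.  Conversely, if W
   presents M on generators z and N = R^m / R^m P, lifting g z through R^m
   and the standard basis of R^m through g gives matrices with W V = Q P and
   1 - T V = H P; then [W Q; -T H] presents A and
   det W = det [W Q; -T H] * det P. *)

From HB Require Import structures.
From mathcomp Require Import all_boot all_order all_algebra.
Import GRing.Theory.
Set Implicit Arguments. Unset Strict Implicit. Unset Printing Implicit Defensive.
Local Open Scope ring_scope.

Definition fcat (T : Type) n m (x : 'I_n -> T) (y : 'I_m -> T) (i : 'I_(n + m)) : T :=
  match split i with inl j => x j | inr k => y k end.

Lemma fcat_lshift (T : Type) n m (x : 'I_n -> T) (y : 'I_m -> T) i :
  fcat x y (lshift m i) = x i.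
Proof. by rewrite /fcat (unsplitK (inl _ i)). Qed.

Lemma fcat_rshift (T : Type) n m (x : 'I_n -> T) (y : 'I_m -> T) i :
  fcat x y (rshift n i) = y i.
Proof. by rewrite /fcat (unsplitK (inr _ i)). Qed.

Lemma fcat_forall (T : Type) (P : T -> Prop) n m (x : 'I_n -> T) (y : 'I_m -> T) :
  (forall i, P (x i)) -> (forall j, P (y j)) -> forall k, P (fcat x y k).
Proof. by move=> Px Py k; rewrite /fcat; case: split. Qed.

Lemma big_fcat (R : nmodType) n m (x : 'I_n -> R) (y : 'I_m -> R) :
  \sum_(k < n + m) fcat x y k = \sum_(i < n) x i + \sum_(j < m) y j.
Proof.
by rewrite big_split_ord; congr (_ + _); apply: eq_bigr => i _;
  rewrite ?fcat_lshift ?fcat_rshift.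
Qed.

Lemma exists_rows (T : Type) m n (P : 'I_m -> 'rV[T]_n -> Prop) :
  (forall i, exists v, P i v) -> exists V : 'M_(m, n), forall i, P i (row i V).
Proof.
by case/fin_all_exists=> v Pv; exists (\matrix_i v i) => i; rewrite rowK.
Qed.
Arguments exists_rows [T m n] P.

Section IdealSpan.
Variable R : comPzRingType.
Implicit Types (S T : R -> Prop) (a r : R).

Definition ideal_span S r : Prop :=
  exists k (c s : 'I_k -> R), (forall i, S (s i)) /\ r = \sum_(i < k) c i * s i.

Definition mul_set S T r : Prop := exists s t, [/\ S s, T t & r = s * t].

Lemma ideal_span0 S : ideal_span S 0.
Proof. by exists 0%N, (fun _ => 0), (fun _ => 0); split=> [[] // | ]; rewrite big_ord0. Qed.

Lemma ideal_span_mem S r : S r -> ideal_span S r.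
Proof. by exists 1%N, (fun _ => 1), (fun _ => r); rewrite big_ord1 mul1r. Qed.

Lemma ideal_spanD S r1 r2 :
  ideal_span S r1 -> ideal_span S r2 -> ideal_span S (r1 + r2).
Proof.
move=> [k1 [c1 [s1 [Ss1 ->]]]] [k2 [c2 [s2 [Ss2 ->]]]].
exists (k1 + k2)%N, (fcat c1 c2), (fcat s1 s2); split; first exact: fcat_forall.
rewrite -big_fcat; apply: eq_bigr => k _.
by rewrite /fcat; case: split.
Qed.

Lemma ideal_spanMl S a r : ideal_span S r -> ideal_span S (a * r).
Proof.
move=> [k [c [s [Ss ->]]]]; exists k, (fun i => a * c i), s; split=> //.
by rewrite mulr_sumr; apply: eq_bigr => i _; rewrite mulrA.
Qed.

Lemma ideal_span_sum S k (F : 'I_k -> R) :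
  (forall i, ideal_span S (F i)) -> ideal_span S (\sum_(i < k) F i).
Proof.
move=> SF; apply: big_ind => //; [exact: ideal_span0 | exact: ideal_spanD].
Qed.

Lemma ideal_span_sub S T :
  (forall r, S r -> T r) -> forall r, ideal_span S r -> ideal_span T r.
Proof. by move=> ST r [k [c [s [Ss ->]]]]; exists k, c, s; split=> // i; apply: ST. Qed.

Lemma eq_ideal_span S T :
  (forall r, S r <-> T r) -> forall r, ideal_span S r <-> ideal_span T r.
Proof. by move=> ST r; split; apply: ideal_span_sub => x /ST. Qed.

Lemma ideal_mul_span S T r :
  ideal_mul (ideal_span S) (ideal_span T) r <-> ideal_span (mul_set S T) r.
Proof.
split=> [[k [a [b [ab ->]]]] | [k [c [st [STst ->]]]]].
  apply: ideal_span_sum => i; have [[k1 [c [s [Ss ->]]]] [k2 [d [t [Tt ->]]]]] := ab i.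
  rewrite mulr_suml; apply: ideal_span_sum => j; rewrite mulr_sumr.
  apply: ideal_span_sum => l; rewrite mulrACA; apply: ideal_spanMl; apply: ideal_span_mem.
  by exists (s j), (t l).
have /fin_all_exists[s /fin_all_exists[t STt]] := STst.
exists k, (fun i => c i * s i), t; split.
  move=> i; have [Ssi Tti _] := STt i.
  by split; [apply: ideal_spanMl |]; apply: ideal_span_mem.
by apply: eq_bigr => i _; have [_ _ ->] := STt i; rewrite mulrA.
Qed.

End IdealSpan.

Section LinearCombination.
Variables (R : comPzRingType) (M : lmodType R).

Definition lincomb n (x : 'I_n -> M) (c : 'rV[R]_n) : M := \sum_j c 0 j *: x j.

Lemma lincomb_is_linear n (x : 'I_n -> M) : linear (lincomb x).
Proof.
move=> a c d; rewrite /lincomb scaler_sumr -big_split; apply: eq_bigr => j _.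
by rewrite !mxE scalerDl scalerA.
Qed.

HB.instance Definition _ n (x : 'I_n -> M) :=
  GRing.isLinear.Build R 'rV[R]_n M _ (lincomb x) (lincomb_is_linear x).

Lemma eq_lincomb n (x y : 'I_n -> M) : x =1 y -> lincomb x =1 lincomb y.
Proof. by move=> xy c; apply: eq_bigr => j _; rewrite xy. Qed.

Lemma lincomb_rowE m n (x : 'I_n -> M) (X : 'M_(m, n)) i :
  lincomb x (row i X) = \sum_j X i j *: x j.
Proof. by apply: eq_bigr => j _; rewrite mxE. Qed.

Lemma lincomb_fcat n m (x : 'I_n -> M) (y : 'I_m -> M) c d :
  lincomb (fcat x y) (row_mx c d) = lincomb x c + lincomb y d.
Proof.
rewrite /lincomb big_split_ord /=; congr (_ + _); apply: eq_bigr => j _.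
  by rewrite row_mxEl fcat_lshift.
by rewrite row_mxEr fcat_rshift.
Qed.

Lemma linear_mulmx m n (psi : {linear 'rV[R]_m -> M}) (c : 'rV_n) (V : 'M_(n, m)) :
  psi (c *m V) = lincomb (fun j => psi (row j V)) c.
Proof. by rewrite mulmx_sum_row linear_sum; apply: eq_bigr => j _; rewrite linearZ. Qed.

Lemma lincomb_mul n p (x : 'I_n -> M) (c : 'rV_p) (X : 'M_(p, n)) :
  lincomb x (c *m X) = lincomb (fun i => lincomb x (row i X)) c.
Proof. exact: linear_mulmx. Qed.

Lemma linear_lincomb_delta m (psi : {linear 'rV[R]_m -> M}) :
  psi =1 lincomb (fun i => psi (delta_mx 0 i)).
Proof.
move=> v; rewrite -{1}[v]mulmx1 linear_mulmx.
by apply: eq_lincomb => i; rewrite row1.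
Qed.

Definition presents n (x : 'I_n -> M) (X : 'M[R]_n) : Prop :=
  (forall m, exists c, lincomb x c = m) /\ (forall c, lincomb x (c *m X) = 0).

Lemma fitt_genP r :
  fitt_gen M r <-> exists n (x : 'I_n -> M) (X : 'M_n), presents x X /\ r = \det X.
Proof.
split=> [[n [x [X [gen_x [rel_X ->]]]]] | [n [x [X [[gen_x rel_X] ->]]]]].
  exists n, x, X; split=> //; split=> [m | c].
    have [c ->] := gen_x m; exists (\row_j c j).
    by apply: eq_bigr => j _; rewrite mxE.
  rewrite mulmx_sum_row linear_sum big1 // => i _.
  by rewrite linearZ /= lincomb_rowE rel_X scaler0.
exists n, x, X; split=> [m | ]; last split=> // i.
  by have [c <-] := gen_x m; exists (fun j => c 0 j).
by rewrite -lincomb_rowE rowE rel_X.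
Qed.

End LinearCombination.

Section LinearMaps.
Variables (R : comPzRingType) (M N : lmodType R) (h : {linear M -> N}).

Lemma linear_lincomb n (x : 'I_n -> M) c :
  h (lincomb x c) = lincomb (h \o x) c.
Proof. by rewrite linear_sum; apply: eq_bigr => j _; rewrite linearZ. Qed.

Lemma presents_surj n (x : 'I_n -> M) X :
  (forall y, exists m, h m = y) -> presents x X -> presents (h \o x) X.
Proof.
move=> h_surj [gen_x rel_X]; split=> [y | c]; last by rewrite -linear_lincomb rel_X linear0.
by have [m <-] := h_surj y; have [c <-] := gen_x m; exists c; rewrite linear_lincomb.
Qed.

End LinearMaps.

Lemma presents_quad (R : comPzRingType) (N : lmodType R) m (P : 'M[R]_m)
    (psi : {linear 'rV[R]_m -> N}) :
  (forall y, exists v, psi v = y) -> (forall v, psi v = 0 <-> exists w, v = w *m P) ->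
  presents (fun i => psi (delta_mx 0 i)) P.
Proof.
move=> psi_surj ker_psi; split=> [y | c].
  by have [v <-] := psi_surj y; exists v; rewrite linear_lincomb_delta.
by rewrite -linear_lincomb_delta; apply/ker_psi; exists c.
Qed.

Section KernelMatrices.
Variables (R : comPzRingType) (n m : nat).
Variables (W : 'M[R]_n) (P : 'M[R]_m) (V Q : 'M[R]_(n, m)) (T : 'M[R]_(m, n)) (H : 'M[R]_m).
Hypotheses (WV : W *m V = Q *m P) (TV : 1%:M - T *m V = H *m P).

Definition ker_rel_mx : 'M[R]_(n + m) := block_mx W Q (- T) H.
(* Read as combinations of generators z of M, the rows of [ker_gen_mx] are
   z_j minus a lift of g z_j and the lifts of the relations of N: they lie in
   f A, and their preimages generate A with relation matrix [ker_rel_mx]. *)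
Definition ker_gen_mx : 'M[R]_(n + m, n) := col_mx (1%:M - V *m T) (P *m T).

Lemma ker_rel_gen : ker_rel_mx *m ker_gen_mx = col_mx W 0.
Proof.
rewrite mul_block_col !mulmxA -WV -TV; congr col_mx.
  by rewrite mulmxBr mulmx1 mulmxA subrK.
by rewrite mulNmx mulmxBr mulmxBl mul1mx mulmx1 mulmxA addNr.
Qed.

Lemma ker_gen_mulV : ker_gen_mx *m V = col_mx (V *m H) (1%:M - P *m H) *m P.
Proof.
rewrite !mul_col_mx -!mulmxA -TV; congr col_mx.
  by rewrite mulmxBl mul1mx mulmxBr mulmx1 mulmxA.
by rewrite mulmxBl mul1mx -mulmxA -TV mulmxBr mulmx1 subKr.
Qed.

Lemma ker_gen_row (c : 'rV_n) (w : 'rV_m) :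
  c *m V = w *m P -> row_mx c w *m ker_gen_mx = c.
Proof. by move=> cV; rewrite mul_row_col mulmxBr mulmx1 !mulmxA cV subrK. Qed.

Lemma det_ker_rel : \det W = \det ker_rel_mx * \det P.
Proof.
have : ker_rel_mx *m block_mx 1%:M 0 0 P
       = block_mx W 0 (- T) 1%:M *m block_mx 1%:M V 0 1%:M.
  rewrite !mulmx_block ?mulmx1 ?mulmx0 ?mul0mx ?mul1mx ?addr0 ?add0r.
  by rewrite WV -TV addrC mulNmx.
move/(congr1 determinant); rewrite !det_mulmx det_lblock det_ublock det_lblock !det1.
by rewrite mul1r !mulr1 => ->.
Qed.

End KernelMatrices.

Section ShortExact.
Variables (R : comPzRingType) (A M N : lmodType R).
Variables (f : {linear A -> M}) (g : {linear M -> N}).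
Hypotheses (f_inj : injective f) (g_surj : forall y, exists m, g m = y).
Hypothesis exact_fg : forall m, g m = 0 <-> exists a, f a = m.

Lemma lift_ker p n (z : 'I_n -> M) (D : 'M_(p, n)) :
  (forall k, g (lincomb z (row k D)) = 0) ->
  exists y : 'I_p -> A, forall c, f (lincomb y c) = lincomb z (c *m D).
Proof.
move=> gD; have /fin_all_exists[y fy] : forall k, exists a, f a = lincomb z (row k D).
  by move=> k; apply/exact_fg.
by exists y => c; rewrite linear_lincomb lincomb_mul; apply: eq_lincomb.
Qed.

Lemma presents_ext k n (x : 'I_k -> A) X (y : 'I_n -> N) Y :
  presents x X -> presents y Y ->
  exists (u : 'I_(k + n) -> M) Z, presents u (block_mx X 0 Z Y).
Proof.
move=> [gen_x rel_X] [gen_y rel_Y].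
have /fin_all_exists[yt g_yt] : forall j, exists m, g m = y j by move=> j.
have g_lincomb c : g (lincomb yt c) = lincomb y c.
  by rewrite linear_lincomb; apply: eq_lincomb.
have [Z fZ] : exists Z : 'M_(n, k),
    forall i, lincomb yt (row i Y) = lincomb (f \o x) (row i Z).
  apply: (exists_rows (fun i v => lincomb yt (row i Y) = lincomb (f \o x) v)) => i.
  have /exact_fg[a <-] : g (lincomb yt (row i Y)) = 0 by rewrite g_lincomb rowE rel_Y.
  by have [c <-] := gen_x a; exists c; rewrite linear_lincomb.
exists (fcat (f \o x) yt), (- Z); split=> [m | c].
  have [d gd] := gen_y (g m).
  have /exact_fg[a fa] : g (m - lincomb yt d) = 0 by rewrite linearB g_lincomb gd subrr.
  have [c xc] := gen_x a.
  by exists (row_mx c d); rewrite lincomb_fcat -linear_lincomb xc fa subrK.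
rewrite -[c]hsubmxK mul_row_block mulmx0 add0r mulmxN lincomb_fcat linearD linearN /=.
rewrite -linear_lincomb rel_X linear0 add0r !lincomb_mul (eq_lincomb fZ).
by rewrite addNr.
Qed.

Variables (m : nat) (P : 'M[R]_m) (psi : {linear 'rV[R]_m -> N}).
Hypothesis psi_surj : forall y, exists v, psi v = y.
Hypothesis ker_psi : forall v, psi v = 0 <-> exists w, v = w *m P.

Lemma factor_ker_psi p (X : 'M_(p, m)) :
  (forall i, psi (row i X) = 0) -> exists Y, X = Y *m P.
Proof.
move=> psiX.
have [Y XY] := exists_rows (fun i w => row i X = w *m P) (fun i => (ker_psi _).1 (psiX i)).
by exists Y; apply/row_matrixP => i; rewrite row_mul XY.
Qed.

Lemma presents_kernel n (z : 'I_n -> M) W :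
  presents z W -> exists k (y : 'I_k -> A) K, presents y K /\ \det W = \det K * \det P.
Proof.
move=> [gen_z rel_W].
have [V zV] : exists V : 'M_(n, m), forall c, g (lincomb z c) = psi (c *m V).
  have [V psiV] := exists_rows (fun j v => psi v = g (z j)) (fun j => psi_surj (g (z j))).
  exists V => c; rewrite linear_lincomb linear_mulmx.
  by apply: eq_lincomb => j; rewrite psiV.
have [T zT] : exists T : 'M_(m, n), forall c, g (lincomb z (c *m T)) = psi c.
  have [T gT] : exists T : 'M_(m, n),
      forall i, g (lincomb z (row i T)) = psi (delta_mx 0 i).
    apply: (exists_rows (fun i v => g (lincomb z v) = psi (delta_mx 0 i))) => i.
    have [mi <-] := g_surj (psi (delta_mx 0 i)).
    by have [c <-] := gen_z mi; exists c.
  exists T => c; rewrite lincomb_mul linear_lincomb linear_lincomb_delta.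
  exact: eq_lincomb.
have [Q WV] : exists Q, W *m V = Q *m P.
  by apply: factor_ker_psi => i; rewrite row_mul -zV rowE rel_W linear0.
have [H TV] : exists H, 1%:M - T *m V = H *m P.
  apply: factor_ker_psi => i.
  by rewrite rowE mulmxBr mulmx1 mulmxA linearB -zV zT subrr.
have [y fy] : exists y : 'I_(n + m) -> A,
    forall c, f (lincomb y c) = lincomb z (c *m ker_gen_mx P V T).
  apply: lift_ker => i; rewrite zV -row_mul (ker_gen_mulV TV) row_mul.
  by apply/ker_psi; eexists.
exists (n + m)%N, y, (ker_rel_mx W Q T H); split; last exact: (det_ker_rel WV TV).
split=> [a | c].
  have [c zc] := gen_z (f a).
  have /ker_psi[w cV] : psi (c *m V) = 0 by rewrite -zV zc; apply/exact_fg; exists a.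
  by exists (row_mx c w); apply: f_inj; rewrite fy (ker_gen_row T cV).
apply: f_inj; rewrite fy -mulmxA (ker_rel_gen WV TV) linear0.
rewrite -[c]hsubmxK mul_row_col mulmx0 addr0; exact: rel_W.
Qed.

End ShortExact.

Section FittingIdeal.
Variables (R : comPzRingType) (A M N : lmodType R).
Variables (f : {linear A -> M}) (g : {linear M -> N}).
Hypotheses (ses : short_exact f g) (quad_N : quad_presented N).

Lemma fitt_gen_ses r : fitt_gen M r <-> mul_set (fitt_gen A) (fitt_gen N) r.
Proof.
have [f_inj [g_surj exact_fg]] := ses.
have [m [P [psi [_ [psi_surj ker_psi]]]]] := quad_N.
split=> [/fitt_genP[n [z [W [presW ->]]]] | ].
  have [k [y [K [presK ->]]]] :=
    presents_kernel f_inj g_surj exact_fg psi_surj ker_psi presW.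
  exists (\det K), (\det P); split=> //; apply/fitt_genP.
    by exists k, y, K.
  by exists m, (fun i => psi (delta_mx 0 i)), P; split=> //; apply: presents_quad.
move=> [a [b [/fitt_genP[k [x [X [presX ->]]]] /fitt_genP[n [y [Y [presY ->]]]] ->]]].
have [u [Z presU]] := presents_ext g_surj exact_fg presX presY.
by apply/fitt_genP; exists (k + n)%N, u, (block_mx X 0 Z Y); rewrite det_lblock.
Qed.

Lemma Fitt_ses r : Fitt M r <-> ideal_mul (Fitt A) (Fitt N) r.
Proof.
exact: iff_trans (eq_ideal_span fitt_gen_ses r) (iff_sym (ideal_mul_span _ _ r)).
Qed.

End FittingIdeal.

Lemma fitt_gen_surj (R : comPzRingType) (M N : lmodType R) (h : {linear M -> N}) r :
  (forall y, exists m, h m = y) -> fitt_gen M r -> fitt_gen N r.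
Proof.
move=> h_surj /fitt_genP[n [x [X [presX ->]]]]; apply/fitt_genP.
by exists n, (h \o x), X; split=> //; apply: presents_surj.
Qed.

Lemma Fitt_surj (R : comPzRingType) (M N : lmodType R) (h : {linear M -> N}) r :
  (forall y, exists m, h m = y) -> Fitt M r -> Fitt N r.
Proof. by move=> h_surj; apply: ideal_span_sub => s; apply: fitt_gen_surj h_surj. Qed.

Section Pullback.
Variables (R : comPzRingType) (B B' C : lmodType R).
Variables (g : {linear B -> C}) (g' : {linear B' -> C}).

Definition pullback_pred : {pred B * B'} := fun p => g p.1 == g' p.2.

Lemma pullback_submod_closed : submod_closed pullback_pred.
Proof.
split=> [|a u v]; rewrite !unfold_in /pullback_pred /= ?linear0 //.
by move=> /eqP gu /eqP gv; rewrite !linearP gu gv.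
Qed.

HB.instance Definition _ :=
  GRing.isSubmodClosed.Build R (B * B')%type pullback_pred pullback_submod_closed.

Record pullback := Pullback { pullback_val :> B * B'; _ : pullback_val \in pullback_pred }.
HB.instance Definition _ := [isSub for pullback_val].
HB.instance Definition _ := [Choice of pullback by <:].
HB.instance Definition _ := [SubChoice_isSubLmodule of pullback by <:].

Definition pb_fst (p : pullback) : B := (val p).1.
Definition pb_snd (p : pullback) : B' := (val p).2.

Lemma pb_fst_is_linear : linear pb_fst. Proof. by []. Qed.
Lemma pb_snd_is_linear : linear pb_snd. Proof. by []. Qed.
HB.instance Definition _ := GRing.isLinear.Build R pullback B _ pb_fst pb_fst_is_linear.
HB.instance Definition _ := GRing.isLinear.Build R pullback B' _ pb_snd pb_snd_is_linear.

Lemma pullbackP (p : pullback) : g (pb_fst p) = g' (pb_snd p).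
Proof. by apply/eqP; case: p. Qed.

Lemma pullback_mem b b' : g b = g' b' -> (b, b') \in pullback_pred.
Proof. by rewrite unfold_in => /eqP. Qed.

End Pullback.

Section PullbackSwap.
Variables (R : comPzRingType) (B B' C : lmodType R).
Variables (g : {linear B -> C}) (g' : {linear B' -> C}).

Definition pb_swap (p : pullback g g') : pullback g' g :=
  Pullback (pullback_mem (esym (pullbackP p))).

Lemma pb_swap_is_linear : linear pb_swap.
Proof. by move=> a p q; apply: val_inj. Qed.
HB.instance Definition _ :=
  GRing.isLinear.Build R (pullback g g') (pullback g' g) _ pb_swap pb_swap_is_linear.

End PullbackSwap.

Lemma pb_swapK (R : comPzRingType) (B B' C : lmodType R)
    (g : {linear B -> C}) (g' : {linear B' -> C}) :
  cancel (pb_swap (g := g) (g' := g')) (pb_swap (g := g') (g' := g)).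
Proof. by move=> p; apply: val_inj; case: p => [[]]. Qed.

Lemma Fitt_pullback_swap (R : comPzRingType) (B B' C : lmodType R)
    (g : {linear B -> C}) (g' : {linear B' -> C}) r :
  Fitt (pullback g g') r -> Fitt (pullback g' g) r.
Proof.
apply: (Fitt_surj (h := pb_swap (g := g) (g' := g'))) => q.
by exists (pb_swap q); apply: pb_swapK.
Qed.

Section PullbackExact.
Variables (R : comPzRingType) (A B B' C : lmodType R).
Variables (f : {linear A -> B}) (g : {linear B -> C}) (g' : {linear B' -> C}).
Hypothesis ses : short_exact f g.

Lemma pb_inl_subproof a : g (f a) = g' 0.
Proof. by rewrite linear0; apply/ses.2.2; exists a. Qed.

Definition pb_inl (a : A) : pullback g g' := Pullback (pullback_mem (pb_inl_subproof a)).

Lemma pb_inl_is_linear : linear pb_inl.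
Proof.
move=> c a a'; apply: val_inj; rewrite /= linearP; apply/eqP.
by rewrite xpair_eqE /= scaler0 addr0 !eqxx.
Qed.
HB.instance Definition _ :=
  GRing.isLinear.Build R A (pullback g g') _ pb_inl pb_inl_is_linear.

Lemma pullback_ses : short_exact pb_inl (pb_snd (g := g) (g' := g')).
Proof.
have [f_inj [g_surj exact_fg]] := ses.
split=> [a a' /(congr1 (pb_fst (g := g) (g' := g')))/f_inj // | ]; split=> [b' | p].
  have [b gb] := g_surj (g' b').
  by exists (Pullback (pullback_mem gb)).
split=> [p0 | [a <-] //].
have /exact_fg[a fa] : g (pb_fst p) = 0 by rewrite pullbackP p0 linear0.
by exists a; apply: val_inj; rewrite /= fa -p0; case: p {fa p0} => [[]].
Qed.

End PullbackExact.

Theorem lemma2p7 (R : comPzRingType) (A B A' B' C : lmodType R)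
  (f : {linear A -> B}) (g : {linear B -> C})
  (f' : {linear A' -> B'}) (g' : {linear B' -> C}) :
  quad_presented B -> quad_presented B' ->
  short_exact f g -> short_exact f' g' ->
  forall r : R,
    ideal_mul (Fitt A) (Fitt B') r <-> ideal_mul (Fitt A') (Fitt B) r.
Proof.
move=> quad_B quad_B' ses ses' r.
have Fitt_pb := Fitt_ses (pullback_ses g' ses) quad_B' r.
have Fitt_pb' := Fitt_ses (pullback_ses g ses') quad_B r.
by split=> [/Fitt_pb/Fitt_pullback_swap/Fitt_pb' | /Fitt_pb'/Fitt_pullback_swap/Fitt_pb].
Qed.
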